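(* Let $G$ be a group with identity $e$, $A=\{0,1\}$, $S\subseteq G$ finite with $e\in S$, and suppose $(\mathcal P,f)$ generates a local map $\mu:A^S\to A$. Then $e$ is essential for $\mu$ if and only if there exist $z,w$ with $z\neq w$, $\mathrm{Res}_e(z)=\mathrm{Res}_e(w)$, and either $z,w\in\mathcal P^c$ or $z,w\in\mathcal P$.
   Context: $A^S$ is the set of functions $S\to A$. For $s\in S$, $\mathrm{Res}_s(z)=z|_{S\setminus\{s\}}$. An element $s\in S$ is essential for $\mu$ if there exist $z,w\in A^S$ with $\mathrm{Res}_s(z)=\mathrm{Res}_s(w)$ but $\mu(z)\neq\mu(w)$. The pair $(\mathcal P,f)$ generates $\mu$ if $\mathcal P=\{z\in A^S:\mu(z)\neq z(e)\}$ and $f:\mathcal P\to A$ is the restriction of $\mu$ to $\mathcal P$; $\mathcal P^c=A^S\setminus\mathcal P$. *)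

From Stdlib Require Import List.
Set Implicit Arguments.

Definition is_group (G : Type) (mul : G -> G -> G) (inv : G -> G) (e : G) : Prop :=
  (forall x y z, mul x (mul y z) = mul (mul x y) z) /\
  (forall x, mul e x = x) /\ (forall x, mul x e = x) /\
  (forall x, mul (inv x) x = e) /\ (forall x, mul x (inv x) = e).

Definition finite_subset (G : Type) (S : G -> Prop) : Prop :=
  exists l : list G, forall x, S x <-> In x l.

Definition elt (G : Type) (S : G -> Prop) : Type := { x : G | S x }.
Definition config (G : Type) (S : G -> Prop) : Type := elt S -> bool.

Definition Res (G : Type) (S : G -> Prop) (s : elt S) (z : config S)
  : { x : G | S x /\ x <> proj1_sig s } -> bool :=
  fun y => z (exist _ (proj1_sig y) (proj1 (proj2_sig y))).

Definition essential (G : Type) (S : G -> Prop) (s : elt S)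
  (mu : config S -> bool) : Prop :=
  exists z w : config S, Res s z = Res s w /\ mu z <> mu w.

Definition generates (G : Type) (S : G -> Prop) (e0 : elt S)
  (P : config S -> Prop) (f : { z : config S | P z } -> bool)
  (mu : config S -> bool) : Prop :=
  (forall z, P z <-> mu z <> z e0) /\
  (forall zp : { z : config S | P z }, f zp = mu (proj1_sig zp)).

(* Two configurations with the same restriction to S \ {e} differ exactly at e,
   so their values at e are opposite booleans. Since P collects the
   configurations whose image under mu differs from their value at e, two such
   configurations lie on the same side of P exactly when their images under mu
   differ, i.e. exactly when they witness that e is essential. Neither the
   group structure nor the finiteness of S plays a role. *)

From Stdlib Require Import List Classical FunctionalExtensionality ProofIrrelevance.

Set Implicit Arguments.

Section Restriction.

Variables (G : Type) (S : G -> Prop).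

Lemma config_eq_of_Res (s : elt S) (z w : config S) :
  Res s z = Res s w -> z s = w s -> z = w.
Proof.
  intros HR Hs; apply functional_extensionality; intros [x px].
  destruct (classic (x = proj1_sig s)) as [-> | Hx].
  - destruct s as [x0 p0]; simpl in *.
    rewrite (proof_irrelevance _ px p0); exact Hs.
  - pose proof (f_equal (fun r => r (exist _ x (conj px Hx))) HR) as Hx'.
    unfold Res in Hx'; simpl in Hx'.
    rewrite (proof_irrelevance _ (proj1 (conj px Hx)) px) in Hx'; exact Hx'.
Qed.

Lemma Res_eq_neq_at (s : elt S) (z w : config S) :
  Res s z = Res s w -> z <> w -> z s = negb (w s).
Proof.
  intros HR Hzw.
  destruct (z s) eqn:Hz, (w s) eqn:Hw; try reflexivity;
    exfalso; apply Hzw, (config_eq_of_Res HR); congruence.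
Qed.

Lemma essentialP (s : elt S) (mu : config S -> bool) :
  essential s mu <->
  exists z w : config S, z <> w /\ Res s z = Res s w /\ mu z <> mu w.
Proof.
  split.
  - intros [z [w [HR Hmu]]]; exists z, w; repeat split; try assumption.
    intros ->; apply Hmu; reflexivity.
  - intros [z [w [_ [HR Hmu]]]]; exists z, w; split; assumption.
Qed.

End Restriction.

Lemma same_side_iff (A B : Prop) : (~ A /\ ~ B) \/ (A /\ B) <-> (A <-> B).
Proof. destruct (classic A), (classic B); tauto. Qed.

Lemma neqb_negb_iff (a m n : bool) : (m <> negb a <-> n <> a) <-> m <> n.
Proof. destruct a, m, n; simpl; intuition congruence. Qed.

Theorem mainTheorem6
  (G : Type) (mul : G -> G -> G) (inv : G -> G) (e : G)
  (hG : is_group mul inv e)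
  (S : G -> Prop) (hSfin : finite_subset S) (heS : S e)
  (mu : config S -> bool)
  (P : config S -> Prop) (f : { z : config S | P z } -> bool)
  (hgen : generates (exist S e heS) P f mu) :
  essential (exist S e heS) mu <->
  exists z w : config S,
    z <> w /\ Res (exist S e heS) z = Res (exist S e heS) w /\
    ((~ P z /\ ~ P w) \/ (P z /\ P w)).
Proof.
  destruct hgen as [HP _].
  rewrite essentialP.
  split; intros [z [w [Hzw [HR Hside]]]]; exists z, w; repeat split; try assumption;
    rewrite same_side_iff, !HP, (Res_eq_neq_at HR Hzw), neqb_negb_iff in *;
    assumption.
Qed.
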